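(* Let $n,r\in\mathbb{Z}_{\geq1}$ and $m\in\mathbb{Z}_{\geq0}$. Then \[ \mathrm{M}_m(\omega_{n,r})=\sum_{j\geq0}j^m\omega_{n,r}(j)=\sum_{i=0}^{\min(m,r)}\left\{m\atop i\right\}n^{-i}. \] In particular, if $m\leq r$, then $\mathrm{M}_m(\omega_{n,r})=\mathrm{M}_m(\rho_{1/n})$, where $\rho_{1/n}$ is the Poisson distribution with mean $1/n$.
   Context: $C_n\wr S_r=C_n^r\rtimes S_r$ (with $S_r$ permuting coordinates) acts on $B(n,r)=C_n\times\{1,\dots,r\}$ by $((\zeta_1,\dots,\zeta_r),\pi)\cdot(\zeta,i)=(\zeta_i\zeta,\pi(i))$. For $\sigma\in C_n\wr S_r$, $\mathrm{Fix}(\sigma)$ is its set of fixed points in $B(n,r)$ (its size is divisible by $n$). The distribution $\omega_{n,r}:\mathbb{Z}_{\geq0}\to\mathbb{R}_{\geq0}$ is $\omega_{n,r}(j)=|\{\sigma\in C_n\wr S_r: |\mathrm{Fix}(\sigma)|=jn\}|/|C_n\wr S_r|$. For a distribution $\omega$ on $\mathbb{Z}_{\geq0}$, $\mathrm{M}_m(\omega)=\sum_{j\ge0}j^m\omega(j)$. $\rho_\lambda(j)=e^{-\lambda}\lambda^j/j!$. $\left\{m\atop i\right\}$ is the Stirling number of the second kind, with $\left\{m\atop 0\right\}=1$ if $m=0$ and $0$ otherwise. *)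

From Stdlib Require Import Reals.
From mathcomp Require Import all_boot all_fingroup.
Set Implicit Arguments. Unset Strict Implicit. Unset Printing Implicit Defensive.

(* C_n is modelled additively as 'I_n (integers mod n, group law (a+b) mod n);
   {1,...,r} is modelled as 'I_r. *)

Definition wreath (n r : nat) : finType := ({ffun 'I_r -> 'I_n} * {perm 'I_r})%type.

Definition Bset (n r : nat) : finType := ('I_n * 'I_r)%type.

(* The action ((zeta_1..zeta_r),pi).(zeta,i) = (zeta_i zeta, pi(i)); first
   coordinate written additively as a natural number mod n. *)
Definition act_fst (n r : nat) (s : wreath n r) (x : Bset n r) : nat :=
  ((s.1 x.2 : nat) + (x.1 : nat)) %% n.
Definition act_snd (n r : nat) (s : wreath n r) (x : Bset n r) : 'I_r :=
  s.2 x.2.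

Definition Fix (n r : nat) (s : wreath n r) : {set Bset n r} :=
  [set x : Bset n r | (act_fst s x == (x.1 : nat)) && (act_snd s x == x.2)].

Definition omega (n r : nat) (j : nat) : R :=
  Rdiv (INR #|[set s : wreath n r | #|Fix s| == j * n]|) (INR #|[set: wreath n r]|).

(* M_m(omega_{n,r}) = sum_{j >= 0} j^m omega(j).  Since |Fix sigma| <= |B(n,r)| = n r,
   omega_{n,r}(j) = 0 for j > n r (n >= 1), so the series is the finite sum
   over 0 <= j <= n r. *)
Definition moment_omega (n r m : nat) : R :=
  sum_f_R0 (fun j => Rmult (pow (INR j) m) (omega n r j)) (n * r).

Fixpoint stirling2 (m i : nat) {struct m} : nat :=
  match m, i with
  | 0, 0 => 1
  | 0, _.+1 => 0
  | _.+1, 0 => 0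
  | m'.+1, i'.+1 => i'.+1 * stirling2 m' i'.+1 + stirling2 m' i'
  end.

Definition rho (lam : R) (j : nat) : R :=
  Rdiv (Rmult (exp (Ropp lam)) (pow lam j)) (INR (Factorial.fact j)).

From Stdlib Require Import Reals.
From mathcomp Require Import all_boot all_fingroup.
From Coquelicot Require Import Coquelicot.
Set Implicit Arguments. Unset Strict Implicit. Unset Printing Implicit Defensive.

(* A point (zeta, i) is fixed by (z, p) iff p i = i and z i = 0, so |Fix s| is
   n times the number J of such coordinates i.  The falling factorial J^_i
   counts injections of {1..i} into these coordinates; counting pairs
   (s, injection) gives E[J^_i] = r^_i n^(r-i) (r-i)! / (n^r r!), which is
   n^-i for i <= r and 0 otherwise.  Expanding j^m = sum_i S(m,i) j^_i yields
   the formula.  The Poisson law of mean 1/n has all factorial moments n^-i,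
   so its m-th moment agrees as soon as m <= r. *)

Section Stirling.
Local Open Scope nat_scope.

Lemma stirling2_small m i : m < i -> stirling2 m i = 0.
Proof. by elim: m i => [|m IHm] [|i] //= lt_mi; rewrite !IHm ?muln0 // ltnW. Qed.

Lemma mul_ffact x i : x * x ^_ i = x ^_ i.+1 + i * x ^_ i.
Proof.
rewrite ffactnSr; case: (leqP i x) => [le_ix | lt_xi].
  by rewrite [i * _]mulnC -mulnDr subnK // mulnC.
by rewrite ffact_small // !muln0.
Qed.

Lemma expn_stirling2 x m : x ^ m = \sum_(i < m.+1) stirling2 m i * x ^_ i.
Proof.
elim: m => [|m IHm]; first by rewrite big_ord_recl big_ord0.
rewrite expnS IHm big_distrr /= [RHS]big_ord_recl [X in X + _]mul0n add0n.
under [RHS]eq_bigr => i _ do rewrite lift0 /= mulnDl.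
under eq_bigr do rewrite mulnCA mul_ffact mulnDr.
rewrite !big_split /= addnC; congr (_ + _).
rewrite big_ord_recl muln0 add0n [RHS]big_ord_recr /= stirling2_small // muln0 addn0.
by apply: eq_bigr => i _; rewrite /bump /= add1n mulnCA mulnA.
Qed.

End Stirling.

Section FixedCoordinates.
Local Open Scope nat_scope.
Variables n r : nat.
Local Notation N := n.+1.

Definition fixed_coords (s : wreath N r) : {set 'I_r} :=
  [set i | (s.2 i == i) && (s.1 i == ord0)].

Lemma Fix_fixed_coords s : Fix s = setX [set: 'I_N] (fixed_coords s).
Proof.
apply/setP => -[a i]; rewrite !inE /act_fst /act_snd /= andbC; congr (_ && _).
rewrite -{2}(modn_small (ltn_ord a)) -{2}(add0n a) eqn_modDr mod0n.
by rewrite modn_small // -(inj_eq val_inj).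
Qed.

Lemma card_Fix s : #|Fix s| = #|fixed_coords s| * N.
Proof. by rewrite Fix_fixed_coords cardsX cardsT card_ord mulnC. Qed.

Lemma card_fixed_coords_le s : #|fixed_coords s| <= r.
Proof. by have := max_card (mem (fixed_coords s)); rewrite card_ord. Qed.

Lemma card_wreath : #|[set: wreath N r]| = N ^ r * r`!.
Proof.
rewrite cardsT card_prod card_ffun !card_ord; congr (_ * _).
have := card_perm [set: 'I_r]; rewrite cardsT card_ord => <-.
by apply: eq_card => p; rewrite inE; apply/esym/subsetP => x; rewrite inE.
Qed.

(* An injection f lands in the fixed coordinates of (z, p) iff z vanishes and
   p is the identity on its image; the other coordinates are free. *)
Lemma card_ffun_on_fixed_coords i (f : {ffun 'I_i -> 'I_r}) : injective f ->
  #|[set s | f \in ffun_on (fixed_coords s)]| = N ^ (r - i) * (r - i)`!.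
Proof.
move=> injf; pose A := f @: [set: 'I_i].
have cardCA : #|~: A| = r - i.
  by rewrite cardsCs setCK card_ord card_imset // cardsT card_ord.
have -> : [set s | f \in ffun_on (fixed_coords s)] =
    setX [set z in pffun_on ord0 (~: A) predT] [set p in perm_on (~: A)].
  apply/setP => -[z p]; rewrite !inE /=; apply/idP/idP.
    move/ffun_onP => fixed_f; apply/andP; split; first (apply/pffun_onP; split=> //).
    1,2: apply/subsetP => x; rewrite !inE => moved; apply/imsetP => -[k _ xk].
    1,2: by move: (fixed_f k); rewrite inE -xk (negbTE moved) ?andbF.
  case/andP => /pffun_onP[supp_z _] supp_p; apply/ffun_onP => k.
  have Afk : f k \in A by apply: imset_f.
  rewrite inE; apply/andP; split; apply/negPn/negP => moved.
    by have := subsetP supp_p _ moved; rewrite inE Afk.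
  by have := subsetP supp_z _ moved; rewrite inE Afk.
by rewrite cardsX !cardsE card_pffun_on card_perm cardCA card_ord.
Qed.

Lemma sum_ffact_card_fixed_coords i :
  \sum_(s : wreath N r) #|fixed_coords s| ^_ i = r ^_ i * (N ^ (r - i) * (r - i)`!).
Proof.
pose inj_on (S : {set 'I_r}) := [set f : {ffun 'I_i -> 'I_r} | injectiveb f & f \in ffun_on S].
have card_inj_on (S : {set 'I_r}) : #|S| ^_ i = #|inj_on S|.
  have := card_inj_ffuns_on 'I_i (mem S); rewrite card_ord => <-.
  by apply: eq_card => f; rewrite !inE andbC.
under eq_bigr do rewrite card_inj_on -sum1_card big_mkcond.
rewrite exchange_big /= (bigID (fun f : {ffun 'I_i -> 'I_r} => injectiveb f)) /=.
rewrite [X in _ + X]big1 ?addn0 => [|f /negbTE noninj]; last first.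
  by apply: big1 => s _; rewrite inE noninj.
rewrite (eq_bigr (fun _ => N ^ (r - i) * (r - i)`!)) => [|f injf]; last first.
  rewrite -(card_ffun_on_fixed_coords (injectiveP _ injf)) -sum1_card [RHS]big_mkcond.
  by apply: eq_bigr => s _; rewrite !inE injf.
rewrite sum_nat_const; congr (_ * _).
have := card_inj_ffuns 'I_i 'I_r; rewrite !card_ord => <-.
by apply: eq_card => f; rewrite !inE.
Qed.

Lemma sum_expn_card_fixed_coords m :
  \sum_(s : wreath N r) #|fixed_coords s| ^ m =
  \sum_(i < (minn m r).+1) stirling2 m i * (N ^ (r - i) * r`!).
Proof.
under eq_bigr do rewrite expn_stirling2.
rewrite exchange_big /=.
under eq_bigr do rewrite -big_distrr sum_ffact_card_fixed_coords.
have le_min_m : (minn m r).+1 <= m.+1 by rewrite ltnS geq_minl.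
rewrite (big_ord_widen _ (fun i => stirling2 m i * (N ^ (r - i) * r`!)) le_min_m).
rewrite [RHS]big_mkcond; apply: eq_bigr => i _ /=.
rewrite ltnS leq_min -ltnS ltn_ord /=.
case: leqP => [le_ir | lt_ri]; last by rewrite ffact_small // !muln0.
by rewrite [_ ^_ _ * _]mulnCA ffact_fact.
Qed.

Lemma sum_fibres_card_Fix m :
  \sum_(j < (N * r).+1) j ^ m * #|[set s : wreath N r | #|Fix s| == j * N]| =
  \sum_(s : wreath N r) #|fixed_coords s| ^ m.
Proof.
under [LHS]eq_bigr => j _.
  rewrite -sum1_card big_mkcond big_distrr /=.
  under eq_bigr => s _ do rewrite inE card_Fix eqn_mul2r /= (fun_if (muln _)) muln1 muln0.
over.
rewrite exchange_big /=; apply: eq_bigr => s _.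
under eq_bigr => j _ do rewrite eq_sym.
rewrite -big_mkcond (big_ord1_eq _ (expn^~ m)) ltnS (leq_trans (card_fixed_coords_le s)) //.
exact: leq_pmull.
Qed.

End FixedCoordinates.

Section NatCasts.
Local Open Scope R_scope.

Lemma INR_expn a b : INR (a ^ b)%N = INR a ^ b.
Proof. by elim: b => [|b IHb] //=; rewrite expnS mult_INR IHb. Qed.

Lemma INR_sum_ord (f : nat -> nat) k :
  sum_f_R0 (fun i => INR (f i)) k = INR (\sum_(i < k.+1) f i)%N.
Proof.
elim: k => [|k IHk]; first by rewrite big_ord_recr big_ord0.
by rewrite /= IHk [in RHS]big_ord_recr plus_INR.
Qed.

Lemma fact_factorial k : Factorial.fact k = k`!.
Proof. by elim: k => //= k IHk; rewrite factS IHk. Qed.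

End NatCasts.

Section MomentFormula.
Local Open Scope R_scope.
Variables n r m : nat.
Local Notation N := n.+1.

Lemma moment_omega_fixed_coords : moment_omega N r m =
  INR (\sum_(s : wreath N r) #|fixed_coords s| ^ m)%N / INR (N ^ r * r`!)%N.
Proof.
rewrite /moment_omega /omega -card_wreath -sum_fibres_card_Fix.
rewrite -(INR_sum_ord (fun j => j ^ m * #|[set s : wreath N r | #|Fix s| == j * N]|)%N).
rewrite /Rdiv [RHS]Rmult_comm scal_sum; apply: PartSum.sum_eq => j _.
by rewrite mult_INR INR_expn Rmult_assoc.
Qed.

Lemma moment_omega_stirling :
  moment_omega N r m = sum_f_R0 (fun i => INR (stirling2 m i) / INR N ^ i) (minn m r).
Proof.
rewrite moment_omega_fixed_coords sum_expn_card_fixed_coords.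
rewrite -(INR_sum_ord (fun i => stirling2 m i * (N ^ (r - i) * r`!))%N).
rewrite /Rdiv Rmult_comm scal_sum; apply: PartSum.sum_eq => i /leP.
rewrite leq_min => /andP[_ le_ir].
have N_neq0 : INR N <> 0 by apply: not_0_INR.
have pow_split : INR N ^ r = INR N ^ (r - i) * INR N ^ i.
  by rewrite -pow_add -addnE subnK.
have fact_neq0 : INR r`! <> 0 by rewrite -fact_factorial; exact: INR_fact_neq_0.
rewrite !mult_INR !INR_expn pow_split; field.
by split; [|split] => //; exact: pow_nonzero.
Qed.

End MomentFormula.

Section PoissonMoments.
Local Open Scope R_scope.

Lemma is_series_shift_zeros (a : nat -> R) i l :
  (forall j, (j < i)%N -> a j = 0) ->
  is_series (fun k => a (i + k)%coq_nat) l -> is_series a l.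
Proof.
case: i => [|i] a_zero shifted; first exact: is_series_ext shifted.
apply: (is_series_decr_n a i.+1); first by apply/ltP.
rewrite sum_n_Reals (_ : sum_f_R0 a i = 0) ?opp_zero ?plus_zero_r //.
by apply: sum_eq_R0 => j /leP le_ji; apply: a_zero.
Qed.

Lemma is_series_exp x : is_series (fun k => / INR (Factorial.fact k) * x ^ k) (exp x).
Proof. exact/is_pseries_R/is_exp_Reals. Qed.

Lemma is_series_poisson_ffact lam i :
  is_series (fun j => INR (j ^_ i)%N * rho lam j) (lam ^ i).
Proof.
apply: (@is_series_shift_zeros _ i) => [j lt_ji | ].
  by rewrite ffact_small // Rmult_0_l.
have shifted k : INR ((i + k)%coq_nat ^_ i)%N * rho lam (i + k)%coq_nat =
    lam ^ i * exp (- lam) * (/ INR (Factorial.fact k) * lam ^ k).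
  have ffact_ratio : INR ((i + k)%coq_nat ^_ i)%N =
      INR (Factorial.fact (i + k)%coq_nat) / INR (Factorial.fact k).
    rewrite !fact_factorial -addnE -(ffact_fact (leq_addr k i)) addKn mult_INR.
    by field; rewrite -fact_factorial; exact: INR_fact_neq_0.
  rewrite /rho ffact_ratio pow_add; field; split; exact: INR_fact_neq_0.
apply: (is_series_ext _ _ _ (fun k => esym (shifted k))).
set c := lam ^ i * exp (- lam).
have -> : lam ^ i = c * exp lam.
  by rewrite /c Rmult_assoc -exp_plus Rplus_opp_l exp_0 Rmult_1_r.
exact: is_series_scal_l c _ _ (@is_series_exp lam).
Qed.

Lemma is_series_sum_f_R0 (c : nat -> R) (b : nat -> nat -> R) (l : nat -> R) k :
  (forall i, is_series (b i) (l i)) ->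
  is_series (fun j => sum_f_R0 (fun i => c i * b i j) k) (sum_f_R0 (fun i => c i * l i) k).
Proof.
move=> b_l; elim: k => [|k IHk] /=; first exact: (is_series_scal_l (c 0%N) _ _ (b_l 0%N)).
exact: (is_series_plus _ _ _ _ IHk (is_series_scal_l (c k.+1) _ _ (b_l k.+1))).
Qed.

Lemma is_series_poisson_moment lam m :
  is_series (fun j => INR j ^ m * rho lam j)
    (sum_f_R0 (fun i => INR (stirling2 m i) * lam ^ i) m).
Proof.
apply: (is_series_ext (fun j => sum_f_R0 (fun i =>
    INR (stirling2 m i) * (INR (j ^_ i)%N * rho lam j)) m)).
  move=> j; rewrite -INR_expn (expn_stirling2 j m).
  rewrite -(INR_sum_ord (fun i => stirling2 m i * j ^_ i)%N) Rmult_comm scal_sum.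
  by apply: PartSum.sum_eq => i _; rewrite mult_INR Rmult_assoc.
exact: is_series_sum_f_R0 (@is_series_poisson_ffact lam).
Qed.

End PoissonMoments.

Theorem mainTheorem3 (n r m : nat) (hn : (1 <= n)%N) (hr : (1 <= r)%N) :
  moment_omega n r m =
    sum_f_R0 (fun i => Rdiv (INR (stirling2 m i)) (pow (INR n) i)) (minn m r)
  /\ ((m <= r)%N ->
      infinite_sum (fun j => Rmult (pow (INR j) m) (rho (Rinv (INR n)) j)) (moment_omega n r m)).
Proof.
case: n hn => [//|n] _; split; first exact: moment_omega_stirling.
move=> le_mr; apply/is_series_Reals.
rewrite moment_omega_stirling (minn_idPl le_mr).
under PartSum.sum_eq => i _ do rewrite /Rdiv -pow_inv.
exact: is_series_poisson_moment.
Qed.
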